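(* For any context $\Gamma$ and formula $A$, there is at most one focused derivation of the sequent $\Gamma\vdash A$.
   Context: Formulas are built from atoms ($p,q,\dots$) by a binary product: every formula is an atom or $A\bullet B$. A context is a finite (possibly empty) list of formulas; commas denote concatenation. A derivation is a finite rooted tree whose nodes are labelled by rule instances and whose edges are labelled by sequents $\Gamma\vdash A$. A context is irreducible if its leftmost formula is not a product (it is empty or begins with an atom). A focused derivation is a derivation with no undischarged premises using only the rules: ($\bullet L$): from $A,B,\Delta\vdash C$ infer $A\bullet B,\Delta\vdash C$; ($\bullet R^{foc}$): from $\Gamma\vdash A$ and $\Delta\vdash B$ infer $\Gamma,\Delta\vdash A\bullet B$, where $\Gamma$ is irreducible; and ($id^{atm}$): $p\vdash p$ for atoms $p$. *)

From Stdlib Require Import List.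
Import ListNotations.

Inductive fma : Type :=
| atom : nat -> fma
| prod : fma -> fma -> fma.

(* Contexts: finite lists of formulas; comma = list concatenation (++). *)
Definition ctx := list fma.

Definition irreducible (G : ctx) : Prop :=
  match G with
  | [] => True
  | atom _ :: _ => True
  | prod _ _ :: _ => False
  end.

Inductive focused : ctx -> fma -> Type :=
| f_prodL : forall (A B C : fma) (D : ctx),
    focused (A :: B :: D) C -> focused (prod A B :: D) C
| f_prodR : forall (G D : ctx) (A B : fma),
    irreducible G ->
    focused G A -> focused D B -> focused (G ++ D) (prod A B)
| f_id : forall p : nat, focused [atom p] (atom p).

(* The atoms of a sequent, read from left to right, are the same on both
   sides of every focused derivation, and no formula has an empty list of
   atoms.  Hence in an instance of (•R^foc) the split of the context into
   [G ++ D] is forced by the left conclusion [A]: [G] is the only prefix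
   whose atoms are those of [A].  A leftmost product can only be decomposed by
   (•L), since the left premise of (•R^foc) has a nonempty irreducible
   context.  So the last rule and its premises are determined by the sequent,
   and induction on derivations gives uniqueness. *)

From Stdlib Require Import List Program.Equality.
Import ListNotations.

Fixpoint fma_atoms (A : fma) : list nat :=
  match A with
  | atom p => [p]
  | prod A B => fma_atoms A ++ fma_atoms B
  end.

Definition ctx_atoms (G : ctx) : list nat := flat_map fma_atoms G.

Lemma fma_atoms_neq_nil (A : fma) : fma_atoms A <> [].
Proof.
  induction A as [p | A IHA B _]; simpl; [discriminate |].
  destruct (fma_atoms A); [congruence | discriminate].
Qed.

Lemma ctx_atoms_eq_nil (G : ctx) : ctx_atoms G = [] -> G = [].
Proof.
  destruct G as [| A G]; [reflexivity |]. unfold ctx_atoms; simpl.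
  destruct (fma_atoms A) eqn:EA; [contradiction (fma_atoms_neq_nil A) | discriminate].
Qed.

Lemma ctx_atoms_app_inj (G1 D1 G2 D2 : ctx) :
  G1 ++ D1 = G2 ++ D2 -> ctx_atoms G1 = ctx_atoms G2 -> G1 = G2.
Proof.
  revert G2; induction G1 as [| A G1 IH]; intros [| B G2] EGD EG.
  - reflexivity.
  - symmetry; apply ctx_atoms_eq_nil; symmetry; exact EG.
  - apply ctx_atoms_eq_nil; exact EG.
  - injection EGD as <- EGD. f_equal. apply (IH _ EGD).
    unfold ctx_atoms in EG; simpl in EG. eapply app_inv_head; exact EG.
Qed.

Lemma focused_atoms (G : ctx) (A : fma) : focused G A -> ctx_atoms G = fma_atoms A.
Proof.
  unfold ctx_atoms; induction 1 as [A B C D _ IH | G D A B _ _ IHG _ IHD | p]; simpl.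
  - rewrite <- IH; simpl. symmetry; apply app_assoc.
  - rewrite flat_map_app, IHG, IHD. reflexivity.
  - reflexivity.
Qed.

Lemma focused_ctx_neq_nil (G : ctx) (A : fma) : focused G A -> G <> [].
Proof.
  intros d; apply focused_atoms in d. intros ->.
  apply (fma_atoms_neq_nil A); symmetry; exact d.
Qed.

Lemma focused_split_unique (G1 D1 G2 D2 : ctx) (A : fma) :
  focused G1 A -> focused G2 A -> G1 ++ D1 = G2 ++ D2 -> G1 = G2.
Proof.
  intros d1 d2 EGD. apply (ctx_atoms_app_inj _ _ _ _ EGD).
  rewrite (focused_atoms _ _ d1), (focused_atoms _ _ d2). reflexivity.
Qed.

Lemma focused_irreducible_app_neq_prod (G D D' : ctx) (A B C : fma) :
  focused G A -> irreducible G -> G ++ D <> prod B C :: D'.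
Proof.
  intros d HG EGD. destruct G as [| E G]; [exact (focused_ctx_neq_nil _ _ d eq_refl) |].
  injection EGD as -> _. exact HG.
Qed.

Lemma irreducible_proof_irrelevance (G : ctx) (h1 h2 : irreducible G) : h1 = h2.
Proof. destruct G as [| [] ?]; destruct h1, h2; reflexivity. Qed.

Theorem lemma1p18 (G : ctx) (A : fma) (d1 d2 : focused G A) : d1 = d2.
Proof.
  revert d2; induction d1 as [A B C D d1 IH | G D A B h1 dG1 IHG dD1 IHD | p];
    intro d2; dependent destruction d2.
  - f_equal; apply IH.
  - contradiction (focused_irreducible_app_neq_prod _ _ _ _ _ _ d2_1 i x0).
  - contradiction (focused_irreducible_app_neq_prod _ _ _ _ _ _ dG1 h1 (eq_sym x0)).
  - assert (G0 = G) as -> by exact (focused_split_unique _ _ _ _ _ d2_1 dG1 x0).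
    apply app_inv_head in x0 as ->. apply JMeq_eq in x as <-.
    rewrite (irreducible_proof_irrelevance _ i h1), (IHG d2_1), (IHD d2_2).
    reflexivity.
  - reflexivity.
Qed.
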